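(* Let $G=(V,E)$ be a finite, simple, connected $K_w$-minor-free graph and let $U\subseteq V$ with $|U|\ge\max(w,4)$. Then every node of $U$ that participates in the maximum number of good quadruples in $U$ (among all nodes of $U$) is $U$-good.
   Context: The interval $I(u,v)$ is the set of nodes on at least one shortest $u$–$v$ path in $G$. A quadruple in $U$ is a set $\{(a,b),(c,d)\}$ of two unordered pairs with $a,b,c,d\in U$ distinct; it is good if $I(a,b)\cap I(c,d)\ne\emptyset$; a node participates in it if it is one of $a,b,c,d$. Let $q(U)$ and $q_{\mathrm{good}}(U)$ be the numbers of quadruples and of good quadruples in $U$, and $\epsilon_U=q_{\mathrm{good}}(U)/(8q(U))$. A node $a\in U$ is $U$-good if there is a subset $U_a\subseteq U$ of size at least $\lceil 4\epsilon_U(|U|-1)\rceil$ such that for every $b\in U_a$ the number of pairs $c,d\in U$ for which $\{(a,b),(c,d)\}$ is a good quadruple is at least $\lceil 4\epsilon_U\binom{|U|-2}{2}\rceil$. *)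

From HB Require Import structures.
From mathcomp Require Import all_boot all_order all_algebra.
From mathcomp Require Import boolp.
Set Implicit Arguments. Unset Strict Implicit. Unset Printing Implicit Defensive.
Import Order.TTheory GRing.Theory Num.Theory.

Section GraphDefs.
Variables (T : finType) (e : rel T).

(* a walk from u to v with vertex sequence u :: p (length = size p) *)
Definition walk (u : T) (p : seq T) (v : T) : bool := path e u p && (last u p == v).

Definition shortest_walk (u : T) (p : seq T) (v : T) : Prop :=
  walk u p v /\ forall q, walk u q v -> size p <= size q.

Definition in_interval (u v x : T) : Prop :=
  exists p, shortest_walk u p v /\ x \in u :: p.

Definition simple_graph : Prop := symmetric e /\ irreflexive e.

Definition connected_graph : Prop := forall x y, exists p, walk x p y.

Definition connected_set (S : {set T}) : Prop :=
  forall x y, x \in S -> y \in S -> exists p, walk x p y /\ all (mem S) p.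

Definition has_K_minor (w : nat) : Prop :=
  exists B : 'I_w -> {set T},
    [/\ forall i, B i != set0,
        forall i, connected_set (B i),
        forall i j, i != j -> [disjoint B i & B j] &
        forall i j, i != j -> exists x y, [/\ x \in B i, y \in B j & e x y]].

Definition is_quadruple (U : {set T}) (Q : {set {set T}}) : bool :=
  [exists a : T, exists b : T, exists c : T, exists d : T,
     [&& a \in U, b \in U, c \in U, d \in U, uniq [:: a; b; c; d] &
         Q == [set [set a; b]; [set c; d]]]].

Definition good_quad (Q : {set {set T}}) : Prop :=
  exists a b c d x, [/\ Q = [set [set a; b]; [set c; d]],
                        in_interval a b x & in_interval c d x].

Definition quads (U : {set T}) : {set {set {set T}}} := [set Q | is_quadruple U Q].
Definition good_quads (U : {set T}) : {set {set {set T}}} :=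
  [set Q in quads U | `[< good_quad Q >]].

Definition q (U : {set T}) : nat := #|quads U|.
Definition q_good (U : {set T}) : nat := #|good_quads U|.

Definition epsU (U : {set T}) : rat := (q_good U)%:R / (8 * q U)%:R.

Definition good_participation (U : {set T}) (a : T) : nat :=
  #|[set Q in good_quads U | a \in cover Q]|.

Definition good_pairs_with (U : {set T}) (a b : T) : nat :=
  #|[set P : {set T} | [set [set a; b]; P] \in good_quads U]|.

Definition U_good (U : {set T}) (a : T) : Prop :=
  a \in U /\
  exists Ua : {set T},
    [/\ Ua \subset U,
        (Num.ceil (4 * epsU U * (#|U| - 1)%:R) <= #|Ua|%:Z)%R &
        forall b, b \in Ua ->
          (Num.ceil (4 * epsU U * ('C(#|U| - 2, 2))%:R) <= (good_pairs_with U a b)%:Z)%R].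

End GraphDefs.

(* Each node x of U lies in (|U|-1) C(|U|-2,2) quadruples (choose its partner,
   then the other pair), so 4 q(U) = |U| (|U|-1) C(|U|-2,2); and since every
   quadruple has four participants, the participations of the nodes of U add up
   to 4 q_good(U).  A node a of maximal participation therefore lies in at least
   8 eps_U (|U|-1) C(|U|-2,2) good quadruples.  Sorted by the partner b of a, the
   |U|-1 numbers good_pairs_with a b thus average at least twice the threshold
   4 eps_U C(|U|-2,2), while none exceeds C(|U|-2,2); a Markov-type count then
   yields at least 4 eps_U (|U|-1) partners reaching the threshold. *)

From mathcomp Require Import all_boot all_order all_algebra.
From mathcomp Require Import zify ring lra.
Set Implicit Arguments. Unset Strict Implicit. Unset Printing Implicit Defensive.
Import Order.TTheory GRing.Theory Num.Theory.

Lemma double_counting (I J : finType) (A : {set I}) (B : {set J}) (R : I -> J -> bool) :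
  \sum_(i in A) #|[set j in B | R i j]| = \sum_(j in B) #|[set i in A | R i j]|.
Proof.
have card_rel (K : finType) (D : {set K}) (P : pred K) :
    #|[set k in D | P k]| = \sum_(k in D) P k.
  rewrite -sum1_card (eq_bigl (fun k => (k \in D) && P k)) => [|k]; last by rewrite inE.
  by rewrite big_mkcondr /=; apply: eq_bigr => k _; case: (P k).
by under eq_bigr do rewrite card_rel; rewrite exchange_big; under [RHS]eq_bigr do rewrite card_rel.
Qed.

Lemma card_setD1 (T : finType) (A : {set T}) x : x \in A -> #|A :\ x| = #|A| - 1.
Proof. by move=> xA; rewrite [#|A|](cardsD1 x) xA add1n subn1. Qed.

Lemma eq_set2 (T : finType) (A P X Y : {set T}) : X != Y -> [set A; P] = [set X; Y] ->
  (A = X /\ P = Y) \/ (A = Y /\ P = X).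
Proof.
move=> XY E.
have /set2P hA : A \in [set X; Y] by rewrite -E set21.
have /set2P hP : P \in [set X; Y] by rewrite -E set22.
have /set2P hX : X \in [set A; P] by rewrite E set21.
have /set2P hY : Y \in [set A; P] by rewrite E set22.
case: hA hP hX hY => -> [] -> //; [| by left | by right |].
- by move=> _ [] YX; rewrite YX eqxx in XY.
- by move=> [] XY' _; rewrite XY' eqxx in XY.
Qed.

Lemma cover_set2 (T : finType) (X Y : {set T}) : cover [set X; Y] = X :|: Y.
Proof.
apply/setP => x; apply/bigcupP/setUP => [[B /set2P [] -> ]|[xX|xY]]; [by left | by right | |].
- by exists X; rewrite ?set21.
- by exists Y; rewrite ?set22.
Qed.

Section Quadruples.
Variables (T : finType) (U : {set T}).
Implicit Types (x b : T) (X Y P : {set T}) (Q : {set {set T}}) (S : {set {set {set T}}}).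

Lemma quadsP Q :
  reflect (exists X Y, [/\ X :|: Y \subset U, #|X| = 2, #|Y| = 2, [disjoint X & Y]
                          & Q = [set X; Y]])
          (Q \in quads U).
Proof.
rewrite inE; apply: (iffP existsP) => [[a /existsP [b /existsP [c /existsP [d]]]]|].
  case/and5P => aU bU cU dU /andP [uq /eqP ->].
  move: uq; rewrite /= !inE !negb_or => /and4P [/and3P [ab ac ad] /andP [bc bd] cd _].
  exists [set a; b], [set c; d]; split; rewrite ?cards2 ?ab ?cd //.
    by apply/subsetP => y; rewrite !inE => /orP [] /orP [] /eqP ->.
  by rewrite disjoints_subset; apply/subsetP => y; rewrite !inE => /orP [] /eqP ->;
    rewrite negb_or ?ac ?ad ?bc ?bd.
case=> X [Y [sXY /eqP/cards2P [a [b [ab EX]]] /eqP/cards2P [c [d [cd EY]]] dXY ->]].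
move: sXY dXY; rewrite {}EX {}EY => sXY dXY.
have [aU bU cU dU] : [/\ a \in U, b \in U, c \in U & d \in U].
  by split; apply: (subsetP sXY); rewrite !inE eqxx ?orbT.
exists a; apply/existsP; exists b; apply/existsP; exists c; apply/existsP; exists d.
rewrite aU bU cU dU eqxx andbT /= !inE !negb_or ab cd andbT.
move: dXY; rewrite disjoints_subset => /subsetP sub.
have := sub a (set21 a b); have := sub b (set22 a b); rewrite !inE !negb_or.
by case/andP=> -> -> /andP [-> ->].
Qed.

Lemma card_cover_quads Q : Q \in quads U -> #|[set x in U | x \in cover Q]| = 4.
Proof.
case/quadsP=> X [Y [sXY cX cY dXY ->]].
have -> : [set x in U | x \in cover [set X; Y]] = X :|: Y.
  by apply/setP => x; rewrite inE cover_set2 andb_idl // => /(subsetP sXY).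
by rewrite cardsU (disjoint_setI0 dXY) cards0 cX cY.
Qed.

Lemma quads_pairE x b P :
  ([set [set x; b]; P] \in quads U) =
  [&& x \in U, b \in U, x != b, P \subset U :\ x :\ b & #|P| == 2].
Proof.
apply/quadsP/and5P => [[X [Y [sXY cX cY dXY E]]] | [xU bU xb sP cP]].
  have key X' Y' : X' :|: Y' \subset U -> #|X'| = 2 -> #|Y'| = 2 -> [disjoint X' & Y'] ->
      [set x; b] = X' -> P = Y' ->
      [/\ x \in U, b \in U, x != b, P \subset U :\ x :\ b & #|P| == 2].
    move=> sXY' cX' cY' dXY' EX' EY'; subst X' Y'; rewrite cY' eqxx.
    have xb : x != b by move: cX'; rewrite cards2; case: (x != b).
    have [xU bU] : x \in U /\ b \in U by split; apply: (subsetP sXY'); rewrite !inE eqxx ?orbT.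
    split=> //; apply/subsetP => y yP; have yU := subsetP sXY' y (subsetP (subsetUr _ _) y yP).
    move: dXY'; rewrite disjoint_sym disjoints_subset => /subsetP/(_ y yP).
    by rewrite !inE negb_or yU andbT => /andP [-> ->].
  have XY : X != Y.
    by apply: contraTneq dXY => ->; rewrite -setI_eq0 setIid -card_gt0 cY.
  case: (eq_set2 XY E) => -[EX EP]; first exact: key EX EP.
  by apply: (key Y X) EX EP; rewrite 1?setUC 1?disjoint_sym.
exists [set x; b], P; split; rewrite ?cards2 ?xb ?(eqP cP) //.
- apply/subsetP => y; rewrite !inE => /orP [/orP [] /eqP -> // | /(subsetP sP)].
  by rewrite !inE => /and3P [].
- rewrite disjoint_sym disjoints_subset; apply/subsetP => y /(subsetP sP).
  by rewrite !inE negb_or => /and3P [-> -> _].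
Qed.

Lemma quads_partner Q x : Q \in quads U -> x \in cover Q ->
  exists y W, y \in U :\ x /\ Q = [set [set x; y]; W].
Proof.
case/quadsP=> X [Y [sXY cX cY _ ->]] xQ.
have [Z [W [sZU cZ xZ ->]]] :
    exists Z W : {set T}, [/\ Z \subset U, #|Z| = 2, x \in Z & [set X; Y] = [set Z; W]].
  move: xQ; rewrite cover_set2 => /setUP [xX|xY].
    by exists X, Y; split => //; apply: subset_trans (subsetUl _ _) sXY.
  by exists Y, X; rewrite setUC; split => //; apply: subset_trans (subsetUr _ _) sXY.
have /cards2P [c [d [cd EZ]]] : #|Z| == 2 by rewrite cZ.
have [cU dU] : c \in U /\ d \in U by split; apply: (subsetP sZU); rewrite EZ !inE eqxx ?orbT.
move: xZ; rewrite EZ => /set2P [] ->.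
  by exists d, W; rewrite !inE eq_sym cd dU.
by exists c, W; rewrite !inE cd cU [[set d; c]]setUC.
Qed.

Definition pairs_with S x b := [set P | [set [set x; b]; P] \in S].

Definition participation S x := #|[set Q in S | x \in cover Q]|.

Lemma pairs_withS S S' x b : S \subset S' -> pairs_with S x b \subset pairs_with S' x b.
Proof. by move=> sSS'; apply/subsetP => P; rewrite !inE => /(subsetP sSS'). Qed.

Lemma card_pairs_with_quads x b : x \in U -> b \in U -> x != b ->
  #|pairs_with (quads U) x b| = 'C(#|U| - 2, 2).
Proof.
move=> xU bU xb.
have -> : #|U| - 2 = #|U :\ x :\ b|.
  have bUx : b \in U :\ x by rewrite !inE eq_sym xb bU.
  by rewrite (card_setD1 bUx) card_setD1 // -subnDA.
by rewrite -cards_draws; apply: eq_card => P; rewrite [in LHS]inE quads_pairE inE xU bU xb.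
Qed.

Lemma card_pairs_with_le S x b : S \subset quads U -> x \in U -> b \in U :\ x ->
  #|pairs_with S x b| <= 'C(#|U| - 2, 2).
Proof.
move=> sSU xU; rewrite !inE => /andP [bx bU].
by rewrite -(card_pairs_with_quads xU bU) 1?eq_sym // subset_leq_card // pairs_withS.
Qed.

Lemma participation_partners S x : S \subset quads U ->
  participation S x = \sum_(b in U :\ x) #|pairs_with S x b|.
Proof.
move=> sSU.
pose D := [set bP : T * {set T} | (bP.1 \in U :\ x) && (bP.2 \in pairs_with S x bP.1)].
pose glue (bP : T * {set T}) := [set [set x; bP.1]; bP.2].
have x_notin bP : bP \in D -> x \notin bP.2.
  rewrite inE => /andP [_ /(subsetP (pairs_withS _ _ sSU))].
  rewrite inE quads_pairE => /and5P [_ _ _ sP _].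
  by apply/negP => /(subsetP sP); rewrite !inE eqxx andbF.
have glue_inj : {in D &, injective glue}.
  move=> [b P] [b' P'] bPD bPD'; rewrite /glue /= => E; have xP' := x_notin _ bPD'.
  have neq : [set x; b'] != P' by apply: contraNneq xP' => <-; rewrite set21.
  case: (eq_set2 neq E) => -[Eb EP]; last by move: xP'; rewrite -Eb set21.
  move: bPD; rewrite !inE => /andP [/andP [bx _] _].
  have /set2P [bx'|<-] : b \in [set x; b'] by rewrite -Eb set22.
    by rewrite bx' eqxx in bx.
  by rewrite EP.
have glue_im : glue @: D = [set Q in S | x \in cover Q].
  apply/setP => Q; apply/imsetP/idP => [[[b P] bPD ->]|].
    move: bPD; rewrite inE => /andP [_]; rewrite inE => QS.
    by rewrite inE QS cover_set2 in_setU set21.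
  rewrite inE => /andP [QS xQ].
  have [y [W [yUx EQ]]] := quads_partner (subsetP sSU Q QS) xQ.
  exists (y, W); last by rewrite EQ.
  by rewrite inE /= yUx inE -EQ.
rewrite /participation -glue_im card_in_imset //.
transitivity (\sum_(bP | (bP.1 \in U :\ x) && (bP.2 \in pairs_with S x bP.1)) 1).
  by rewrite -sum1_card; apply: eq_bigl => bP; rewrite inE.
rewrite (eq_bigr (fun b => \sum_(P in pairs_with S x b) 1)) => [|b _]; last first.
  by rewrite sum1_card.
by rewrite pair_big_dep.
Qed.

Lemma sum_participation S : S \subset quads U ->
  \sum_(x in U) participation S x = 4 * #|S|.
Proof.
move=> sSU; rewrite (double_counting U S (fun x Q => x \in cover Q)) mulnC -sum_nat_const.
by apply: eq_bigr => Q QS; rewrite card_cover_quads // (subsetP sSU).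
Qed.

Lemma four_q : 4 * q U = #|U| * (#|U| - 1) * 'C(#|U| - 2, 2).
Proof.
rewrite /q -sum_participation // -mulnA -sum_nat_const; apply: eq_bigr => x xU.
rewrite participation_partners // (eq_bigr (fun _ => 'C(#|U| - 2, 2))) => [|b].
  by rewrite sum_nat_const card_setD1.
by rewrite !inE => /andP [bx bU]; rewrite card_pairs_with_quads // eq_sym.
Qed.
End Quadruples.

Section Averaging.
Local Open Scope ring_scope.

Lemma ceil_le_card_large (R : archiRealFieldType) (T : finType) (B : {set T})
    (g : T -> nat) (C : nat) (x : R) :
  (0 < C)%N -> 0 <= x -> (forall b, b \in B -> g b <= C)%N ->
  2 * x * #|B|%:R * C%:R <= (\sum_(b in B) g b)%:R ->
  Num.ceil (x * #|B|%:R) <= #|[set b in B | Num.ceil (x * C%:R) <= (g b)%:Z]|%:Z.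
Proof.
move=> C_gt0 x_ge0 g_le sum_ge.
set large := [set b in B | _].
have g_bound b : b \in B ->
    (g b)%:R <= (if Num.ceil (x * C%:R) <= (g b)%:Z then C%:R else 0) + x * C%:R.
  move=> bB; case: ifP => [_ | /negbT].
    by rewrite (@le_trans _ _ C%:R) ?ler_nat ?g_le // lerDl mulr_ge0.
  by rewrite -ltNge ceil_gt_int add0r -pmulrn => /ltW.
have sum_large : \sum_(b in B) (if Num.ceil (x * C%:R) <= (g b)%:Z then C%:R else 0)
    = #|large|%:R * C%:R :> R.
  rewrite -big_mkcondr (eq_bigl (fun b => b \in large)) => [|b]; last by rewrite inE.
  by rewrite sumr_const mulr_natl.
have sum_le : (\sum_(b in B) g b)%:R <= #|large|%:R * C%:R + x * (#|B|%:R * C%:R).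
  rewrite -sum_large mulrCA mulr_natl -sumr_const -big_split natr_sum.
  exact: ler_sum.
rewrite -!mulrA in sum_ge.
have : x * (#|B|%:R * C%:R) <= #|large|%:R * C%:R.
  move: sum_ge sum_le; move: (x * _) (#|large|%:R * _) (\sum_(b in B) g b)%:R => y k S; lra.
by rewrite mulrA ler_pM2r ?ltr0n // ceil_le_int -pmulrn.
Qed.
End Averaging.

Lemma good_quads_sub (T : finType) (e : rel T) (U : {set T}) : good_quads e U \subset quads U.
Proof. by apply/subsetP => Q; rewrite inE => /andP []. Qed.

Section MaximalParticipation.
Variables (T : finType) (e : rel T) (U : {set T}) (a : T).
Hypotheses (U_ge4 : 4 <= #|U|) (aU : a \in U)
  (a_max : forall x, x \in U -> good_participation e U x <= good_participation e U a).

Lemma q_good_le_participation : 4 * q_good e U <= #|U| * good_participation e U a.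
Proof.
rewrite /q_good -(sum_participation (good_quads_sub e U)) -sum_nat_const.
exact: leq_sum.
Qed.

Lemma q_good_mul_le :
  q_good e U * (#|U| - 1) * 'C(#|U| - 2, 2) <= good_participation e U a * q U.
Proof.
have := four_q U; have := q_good_le_participation; nia.
Qed.

Lemma sum_good_pairs_with_ge :
  (2 * (4 * epsU e U) * #|U :\ a|%:R * 'C(#|U| - 2, 2)%:R
     <= (\sum_(b in U :\ a) good_pairs_with e U a b)%:R :> rat)%R.
Proof.
have C_gt0 : 0 < 'C(#|U| - 2, 2) by rewrite bin_gt0; lia.
have q_gt0 : (0 < (q U)%:R :> rat)%R by rewrite ltr0n; have := four_q U; nia.
rewrite -(participation_partners a (good_quads_sub e U)) card_setD1 //.
have -> : (2 * (4 * epsU e U) * (#|U| - 1)%:R * 'C(#|U| - 2, 2)%:R =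
          (q_good e U * (#|U| - 1) * 'C(#|U| - 2, 2))%:R / (q U)%:R :> rat)%R.
  by rewrite /epsU !natrM; field; rewrite lt0r_neq0.
by rewrite ler_pdivrMr // -natrM ler_nat q_good_mul_le.
Qed.
End MaximalParticipation.

Theorem mainTheorem7 (T : finType) (e : rel T) (w : nat) (U : {set T}) :
  simple_graph e -> connected_graph e -> ~ has_K_minor e w ->
  maxn w 4 <= #|U| ->
  forall a, a \in U ->
    (forall x, x \in U -> good_participation e U x <= good_participation e U a) ->
    U_good e U a.
Proof.
move=> _ _ _ U_ge a aU a_max.
have U_ge4 : 4 <= #|U| := leq_trans (leq_maxr w 4) U_ge.
split=> //.
exists [set b in U :\ a | (Num.ceil (4 * epsU e U * 'C(#|U| - 2, 2)%:R)
                             <= (good_pairs_with e U a b)%:Z)%R]; split.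
- by apply/subsetP => b; rewrite !inE => /andP [/andP [_ ->]].
- rewrite -(card_setD1 aU); apply: ceil_le_card_large.
  + by rewrite bin_gt0; lia.
  + by rewrite mulr_ge0 // divr_ge0.
  + by move=> b; apply: card_pairs_with_le (good_quads_sub e U) aU.
  + exact: sum_good_pairs_with_ge.
- by move=> b; rewrite inE => /andP [].
Qed.
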